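(* Let $M$ be a matroid with at least two bases and of rank at most $2$. Then $M$ has the Borsuk property.
   Context: All matroids are finite. For a matroid $M$, $\mathcal{B}(M)$ denotes its set of bases, and the distance between two bases $B,B'$ is $|B\triangle B'|$ (symmetric difference); $\operatorname{diam}$ denotes the diameter with respect to this distance. The Borsuk number $f(M)$ is the minimum number of parts in a partition of $\mathcal{B}(M)$ in which every part has diameter strictly smaller than $\operatorname{diam}(\mathcal{B}(M))$; if $M$ has exactly one basis, $f(M):=+\infty$. If $M$ has $n$ elements and $c$ connected components, $M$ has the Borsuk property if $f(M)\le n-c+1$. *)

From mathcomp Require Import all_boot.
Set Implicit Arguments. Unset Strict Implicit. Unset Printing Implicit Defensive.

Section Matroid.
Variable E : finType.

Definition basis_exchange (bs : {set {set E}}) : Prop :=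
  forall B1 B2, B1 \in bs -> B2 \in bs -> forall x, x \in B1 :\: B2 ->
    exists2 y, y \in B2 :\: B1 & (y |: (B1 :\ x)) \in bs.

Record matroid := Matroid {
  bases : {set {set E}};
  bases_nonempty : bases != set0;
  bases_exchange : basis_exchange bases }.

Variable M : matroid.

(* rank = size of a basis (all bases have the same size) *)
Definition rank : nat := \max_(B in bases M) #|B|.

Definition indep (I : {set E}) : bool := [exists B in bases M, I \subset B].
Definition circuit (C : {set E}) : bool :=
  ~~ indep C && [forall D : {set E}, (D \proper C) ==> indep D].

Definition conn (e f : E) : bool :=
  (e == f) || [exists C : {set E}, circuit C && (e \in C) && (f \in C)].
Definition components : {set {set E}} := [set [set f | conn e f] | e : E].
Definition n_components : nat := #|components|.

Definition dist (B1 B2 : {set E}) : nat := #|(B1 :\: B2) :|: (B2 :\: B1)|.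
Definition diam (F : {set {set E}}) : nat :=
  \max_(B1 in F) \max_(B2 in F) dist B1 B2.

Definition borsuk_partition (P : {set {set {set E}}}) : bool :=
  partition P (bases M) && [forall X in P, diam X < diam (bases M)].

(* Borsuk number: None encodes +infinity (exactly one basis); otherwise the
   least k such that a Borsuk partition with k parts exists (such a partition
   always exists with at most #|bases M| parts, namely the singletons). *)
Definition borsuk_number : option nat :=
  if #|bases M| <= 1 then None
  else Some (find (fun k => [exists P, borsuk_partition P && (#|P| == k)])
                  (iota 0 (#|bases M|).+1)).

Definition borsuk_property : Prop :=
  match borsuk_number with
  | Some k => k <= #|E| - n_components + 1
  | None => False
  end.

End Matroid.

(* Loops are singleton components, so the bound to prove is #nonloops - c' + 1, where c'
   counts the components met by nonloops.  In rank 1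
   the nonloops form one component and every basis is a singleton of a nonloop.  In rank 2,
   non-adjacency ([a; b] is not a basis) is an equivalence on nonloops whose classes are the
   parallel classes, and the bases are the pairs from distinct classes.  Two bases sharing an
   element are at distance at most 2, so as soon as two disjoint bases exist (diameter 4),
   grouping the bases by a chosen element of a set S meeting all of them is a Borsuk
   partition with at most #S parts.  With at least three classes the nonloops form one
   component, and either S := nonloops works or the nonloops are just a triangle, with at
   most three bases.  With two classes there are two components and S is the larger class. *)

From mathcomp Require Import all_boot zify.
Set Implicit Arguments. Unset Strict Implicit. Unset Printing Implicit Defensive.

Lemma card_partition_le (T : finType) (P : {set {set T}}) (D : {set T}) :
  partition P D -> #|P| <= #|D|.
Proof.
move=> PD; rewrite (card_partition PD) -sum1_card; apply: leq_sum => A AP.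
by rewrite card_gt0 (partition_neq0 PD AP).
Qed.

Lemma card_preim_partition (aT rT : finType) (F : aT -> rT) (D : {set aT}) :
  #|preim_partition F D| <= #|F @: D|.
Proof.
have -> : preim_partition F D = (fun t => [set y in D | t == F y]) @: (F @: D).
  by rewrite -imset_comp.
exact: leq_imset_card.
Qed.

Lemma disjoint_pairs (T : finType) (a b c d : T) :
  a != c -> a != d -> b != c -> b != d -> [disjoint [set a; b] & [set c; d]].
Proof.
move=> ac ad bc bd; rewrite -setI_eq0; apply/eqP/setP => z; rewrite !inE.
case: (eqVneq z a) => [->|_]; first by rewrite (negbTE ac) (negbTE ad).
by case: (eqVneq z b) => [->|//]; rewrite (negbTE bc) (negbTE bd).
Qed.

Lemma subset_card_setD1 (T : finType) (A B : {set T}) :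
  B \subset A -> #|A| = #|B|.+1 -> exists2 z, z \in A & B = A :\ z.
Proof.
move=> sBA cardA; have /cards1P[z zAB] : #|A :\: B| == 1.
  by rewrite cardsD (setIidPr sBA) cardA subSnn.
exists z; first by have := set11 z; rewrite -zAB inE => /andP[].
by have := setDDr A A B; rewrite setDv set0U (setIidPr sBA) zAB.
Qed.

Section Matroid.
Variables (E : finType) (M : matroid E).
Implicit Types (B C D I J K : {set E}) (x y : E).

Lemma card_bases_le B1 B2 : B1 \in bases M -> B2 \in bases M -> #|B2| <= #|B1|.
Proof.
move=> B1b; move cardD: #|B2 :\: B1| => n; elim: n B2 cardD => [|n IHn] B2 cardD B2b.
  by apply: subset_leq_card; rewrite -setD_eq0 -cards_eq0 cardD.
have /set0Pn[x xB21] : B2 :\: B1 != set0 by rewrite -card_gt0 cardD.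
have [y yB12 yB] := bases_exchange B2b B1b xB21.
move: xB21 yB12; rewrite !inE => /andP[xB1 xB2] /andP[yB2 yB1].
have -> : #|B2| = #|y |: (B2 :\ x)|.
  by rewrite cardsU1 !inE (negbTE yB2) andbF (cardsD1 x B2) xB2.
apply: IHn yB; have -> : (y |: B2 :\ x) :\: B1 = (B2 :\: B1) :\ x.
  apply/setP => z; rewrite !inE; case: (eqVneq z y) => [->|_]; first by rewrite yB1 andbF.
  by rewrite /= andbCA.
by move: cardD; rewrite (cardsD1 x) !inE xB1 xB2 => -[].
Qed.

Lemma card_bases_eq B1 B2 : B1 \in bases M -> B2 \in bases M -> #|B1| = #|B2|.
Proof. by move=> B1b B2b; apply/eqP; rewrite eqn_leq !card_bases_le. Qed.

Definition nonloops : {set E} := \bigcup_(B in bases M) B.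

Definition component x : {set E} := [set y | conn M x y].

Lemma connxx x : conn M x x.
Proof. by rewrite /conn eqxx. Qed.

Lemma nonloopsP x : reflect (exists2 B, B \in bases M & x \in B) (x \in nonloops).
Proof. exact: bigcupP. Qed.

Lemma basis_meet_nonloops B : B \in bases M -> 0 < #|B| -> B :&: nonloops != set0.
Proof. by move=> Bb; rewrite (setIidPl (bigcup_sup B Bb)) card_gt0. Qed.

Lemma indepP I : reflect (exists2 B, B \in bases M & I \subset B) (indep M I).
Proof. exact: exists_inP. Qed.

Lemma indepS I J : I \subset J -> indep M J -> indep M I.
Proof. by move=> sIJ /indepP[B Bb sJB]; apply/indepP; exists B => //; apply: subset_trans sJB. Qed.

Lemma indep_basis B : B \in bases M -> indep M B.
Proof. by move=> Bb; apply/indepP; exists B. Qed.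

Lemma indep1 x : x \in nonloops -> indep M [set x].
Proof. by case/nonloopsP=> B Bb xB; apply/indepP; exists B; rewrite ?sub1set. Qed.

Lemma circuit_proper C D : circuit M C -> D \proper C -> indep M D.
Proof. by case/andP=> _ /forallP/(_ D)/implyP. Qed.

Lemma circuitI C : ~~ indep M C -> (forall x, x \in C -> indep M (C :\ x)) -> circuit M C.
Proof.
move=> Cdep CDind; rewrite /circuit Cdep; apply/forall_inP => D /properP[sDC [x xC xD]].
by apply: indepS (CDind x xC); rewrite subsetD1 sDC.
Qed.

Lemma circuit_loop C x y : circuit M C -> x \in C -> x \notin nonloops -> y \in C -> y = x.
Proof.
move=> Ccirc xC xloop yC; apply/eqP; apply: contraNT xloop => yx.
have /indepP[B Bb] : indep M [set x].
  apply: circuit_proper Ccirc _; apply/properP.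
  by split; [rewrite sub1set | exists y; rewrite ?inE].
by rewrite sub1set => xB; apply/nonloopsP; exists B.
Qed.

Lemma circuit_pair x y : x != y -> x \in nonloops -> y \in nonloops ->
  ~~ indep M [set x; y] -> circuit M [set x; y].
Proof.
move=> xy xN yN xydep; apply: circuitI => // z; rewrite !inE => /orP[]/eqP->.
  by rewrite setU1K ?inE // indep1.
by rewrite setUC setU1K ?inE 1?eq_sym // indep1.
Qed.

Lemma conn_circuit C x y : circuit M C -> x \in C -> y \in C -> conn M x y.
Proof. by move=> Ccirc xC yC; apply/orP; right; apply/existsP; exists C; rewrite Ccirc xC yC. Qed.

Lemma conn_loop x y : x != y -> y \notin nonloops -> ~~ conn M x y.
Proof.
move=> xy yloop; rewrite /conn (negbTE xy); apply/existsP => -[C /andP[/andP[Ccirc xC] yC]].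
by move: xy; rewrite (circuit_loop Ccirc yC yloop xC) eqxx.
Qed.

Lemma component_nonloops x K : x \in nonloops -> K \subset nonloops ->
  {in nonloops, forall y, conn M x y = (y \in K)} -> component x = K.
Proof.
move=> xN sKN connK; apply/setP => y; rewrite inE.
case: (boolP (y \in nonloops)) => [/connK //|yloop].
have xy : x != y by apply: contraNneq yloop => <-.
by rewrite (negbTE (conn_loop xy yloop)); apply/esym/(contraNF (subsetP sKN y)).
Qed.

Lemma n_components_bound (Q : {set {set E}}) :
  (forall x, x \in nonloops -> component x \in Q) ->
  n_components M + #|nonloops| <= #|E| + #|Q|.
Proof.
move=> compQ; have sub : components M \subset Q :|: component @: ~: nonloops.
  apply/subsetP => _ /imsetP[x _ ->]; rewrite inE.
  by case: (boolP (x \in nonloops)) => [/compQ -> //|xloop]; rewrite imset_f ?inE ?orbT.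
rewrite /n_components -(cardsC nonloops) addnC -addnA leq_add2l.
apply: leq_trans (subset_leq_card sub) _; apply: leq_trans (leq_card_setU _ _).1 _.
by rewrite addnC leq_add2r leq_imset_card.
Qed.

Lemma dist_card B1 B2 : dist B1 B2 + 2 * #|B1 :&: B2| = #|B1| + #|B2|.
Proof.
have disjD : [disjoint B1 :\: B2 & B2 :\: B1].
  rewrite disjoints_subset; apply/subsetP => z.
  by rewrite !inE => /andP[/negbTE-> _]; rewrite andbF.
have := (leq_card_setU (B1 :\: B2) (B2 :\: B1)).2; rewrite disjD => /eqP.
rewrite /dist => ->; have := cardsID B2 B1; have := cardsID B1 B2; rewrite setIC; lia.
Qed.

Lemma dist_xx B : dist B B = 0.
Proof. by rewrite /dist setDv setU0 cards0. Qed.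

Lemma dist_le_diam B1 B2 : B1 \in bases M -> B2 \in bases M -> dist B1 B2 <= diam (bases M).
Proof. by move=> B1b B2b; apply: (bigmax_sup B1) => //; apply: (bigmax_sup B2). Qed.

Lemma diam_lt (X : {set {set E}}) d : 0 < d ->
  (forall B1 B2, B1 \in X -> B2 \in X -> dist B1 B2 < d) -> diam X < d.
Proof.
case: d => // d _ distX; rewrite ltnS.
by apply/bigmax_leqP => B1 B1X; apply/bigmax_leqP => B2 B2X; apply: distX.
Qed.

Lemma diam_gt0 : 1 < #|bases M| -> 0 < diam (bases M).
Proof.
case/card_gt1P => B1 [B2 [B1b B2b B12]]; apply: leq_trans (dist_le_diam B1b B2b).
rewrite /dist card_gt0; apply: contra B12; rewrite setU_eq0 !setD_eq0 => /andP[s12 s21].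
by rewrite eqEsubset s12 s21.
Qed.

Lemma borsuk_number_le P : 1 < #|bases M| -> borsuk_partition M P ->
  exists2 k, borsuk_number M = Some k & k <= #|P|.
Proof.
move=> many PB; rewrite /borsuk_number leqNgt many; eexists => //.
rewrite leqNgt; apply/negP => /(before_find 0).
have /andP[PD _] := PB; have PDle := card_partition_le PD.
rewrite nth_iota ?ltnS // add0n => /existsPn/(_ P).
by rewrite PB eqxx.
Qed.

Lemma borsuk_partition_preim (T : finType) (F : {set E} -> T) : 1 < #|bases M| ->
  (forall B1 B2, B1 \in bases M -> B2 \in bases M -> B1 != B2 -> F B1 = F B2 ->
     dist B1 B2 < diam (bases M)) ->
  borsuk_partition M (preim_partition F (bases M)).
Proof.
move=> many distF; rewrite /borsuk_partition preim_partitionP.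
apply/forall_inP => _ /imsetP[B Bb ->]; apply: diam_lt (diam_gt0 many) _ => B1 B2.
rewrite !inE => /andP[B1b /eqP FB1] /andP[B2b /eqP FB2].
have [<-|B12] := eqVneq B1 B2; first by rewrite dist_xx diam_gt0.
by apply: distF; rewrite // -FB1 -FB2.
Qed.

Lemma star_borsuk_partition (S : {set E}) : 1 < #|bases M| ->
  (forall B, B \in bases M -> B :&: S != set0) ->
  (forall B1 B2 x, B1 \in bases M -> B2 \in bases M -> B1 != B2 ->
     x \in S -> x \in B1 -> x \in B2 -> dist B1 B2 < diam (bases M)) ->
  exists2 P, borsuk_partition M P & #|P| <= #|S|.
Proof.
move=> many meetS distS; pose F B := [pick x in B :&: S].
have FS B : B \in bases M -> exists2 x, x \in B :&: S & F B = Some x.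
  move=> Bb; rewrite /F; case: pickP => [x xBS|none]; first by exists x.
  by case/set0Pn: (meetS B Bb) => x; rewrite none.
exists (preim_partition F (bases M)).
  apply: borsuk_partition_preim => // B1 B2 B1b B2b B12.
  have [x1 xBS1 ->] := FS B1 B1b; have [x2 + ->] := FS B2 B2b => + [x12].
  move: xBS1; rewrite x12 !inE => /andP[xB1 xS] /andP[xB2 _].
  exact: distS xS xB1 xB2.
apply: leq_trans (card_preim_partition _ _) _; apply: leq_trans (leq_imset_card Some S).
apply: subset_leq_card; apply/subsetP => _ /imsetP[B Bb ->].
by have [x + ->] := FS B Bb; rewrite inE => /andP[_ xS]; apply: imset_f.
Qed.

Lemma borsuk_property_of_partition P (Q : {set {set E}}) :
  1 < #|bases M| -> borsuk_partition M P ->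
  (forall x, x \in nonloops -> component x \in Q) ->
  #|P| + #|Q| <= #|nonloops| + 1 -> borsuk_property M.
Proof.
move=> many PB compQ PQ; rewrite /borsuk_property.
have [k -> kP] := borsuk_number_le many PB; have := n_components_bound compQ; lia.
Qed.

Lemma connected_borsuk P : 1 < #|bases M| -> borsuk_partition M P ->
  #|P| <= #|nonloops| -> {in nonloops, forall x, component x = nonloops} ->
  borsuk_property M.
Proof.
move=> many PB cardP connected.
apply: (borsuk_property_of_partition many PB (Q := [set nonloops])).
  by move=> x /connected ->; rewrite set11.
by rewrite cards1 leq_add2r.
Qed.

End Matroid.

Section RankOne.
Variables (E : finType) (M : matroid E).
Hypothesis bases_card1 : forall B, B \in bases M -> #|B| = 1.

Lemma rank_one_component x : x \in nonloops M -> component M x = nonloops M.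
Proof.
move=> xN; apply: component_nonloops => // y yN; rewrite yN.
have [<-|xy] := eqVneq x y; first exact: connxx.
apply: conn_circuit (circuit_pair xy xN yN _) _ _; rewrite ?inE ?eqxx ?orbT //.
by apply/indepP => -[B Bb /subset_leq_card]; rewrite (bases_card1 Bb) cards2 xy.
Qed.

Lemma rank_one_borsuk : 1 < #|bases M| -> borsuk_property M.
Proof.
move=> many; have [P PB cardP] : exists2 P, borsuk_partition M P & #|P| <= #|nonloops M|.
  apply: star_borsuk_partition => // [B Bb|B1 B2 x B1b B2b B12 _ xB1 xB2].
    by rewrite basis_meet_nonloops // bases_card1.
  have /eqP/cards1P[x1 Bx1] := bases_card1 B1b; have /eqP/cards1P[x2 Bx2] := bases_card1 B2b.
  by move: xB1 xB2 B12; rewrite Bx1 Bx2 => /set1P <- /set1P <-; rewrite eqxx.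
exact: connected_borsuk many PB cardP rank_one_component.
Qed.

End RankOne.

Section RankTwo.
Variables (E : finType) (M : matroid E).
Hypothesis bases_card2 : forall B, B \in bases M -> #|B| = 2.
Implicit Types (B C : {set E}) (a b c x y z : E).

Definition adjacent a b := [set a; b] \in bases M.

Definition parallel_class a := [set x in nonloops M | ~~ adjacent x a].

Lemma adjacentC a b : adjacent a b = adjacent b a.
Proof. by rewrite /adjacent setUC. Qed.

Lemma adjacent_neq a b : adjacent a b -> a != b.
Proof. by move/bases_card2; rewrite cards2; case: eqP. Qed.

Lemma adjacentxx a : adjacent a a = false.
Proof. by apply/negP => /adjacent_neq; rewrite eqxx. Qed.

Lemma adjacent_nonloop a b : adjacent a b -> a \in nonloops M.
Proof. by move=> ab; apply/bigcupP; exists [set a; b]; rewrite ?set21. Qed.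

Lemma adjacent_nonloop_r a b : adjacent a b -> b \in nonloops M.
Proof. by rewrite adjacentC; apply: adjacent_nonloop. Qed.

Lemma basis_adjacent B x : B \in bases M -> x \in B -> exists2 y, adjacent x y & B = [set x; y].
Proof.
move=> Bb; have /eqP/cards2P[u [v [_ Buv]]] := bases_card2 Bb.
by rewrite /adjacent Buv !inE in Bb * => /orP[]/eqP->; [exists v | exists u; rewrite setUC].
Qed.

Lemma indep_adjacent a b : a != b -> indep M [set a; b] -> adjacent a b.
Proof.
move=> ab /indepP[B Bb sB]; rewrite /adjacent (_ : [set a; b] = B) //.
by apply/eqP; rewrite eqEcard sB (bases_card2 Bb) cards2 ab.
Qed.

(* Exchanging the partner w of t out of a basis [t; w] towards [s; u] brings in s or u. *)
Lemma adjacent_cover s u t : adjacent s u -> t \in nonloops M -> adjacent t s || adjacent t u.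
Proof.
move=> su /bigcupP[B Bb tB]; have [w tw Btw] := basis_adjacent Bb tB.
have [ws|ws] := eqVneq w s; first by rewrite -ws tw.
have [wu|wu] := eqVneq w u; first by rewrite -wu tw orbT.
have wB : w \in B :\: [set s; u] by rewrite Btw !inE eqxx orbT (negbTE ws) (negbTE wu).
have [y] := bases_exchange Bb su wB; rewrite Btw !inE => /andP[_ ysu].
have -> : [set t; w] :\ w = [set t] by rewrite setUC setU1K // inE eq_sym adjacent_neq.
by rewrite -/(adjacent y t) adjacentC; case/orP: ysu => /eqP-> ->; rewrite ?orbT.
Qed.

Lemma nonadjacent_trans b a c : b \in nonloops M ->
  ~~ adjacent a b -> ~~ adjacent b c -> ~~ adjacent a c.
Proof.
move=> bN ab bc; apply/negP => /adjacent_cover/(_ bN).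
by rewrite adjacentC (negbTE ab) (negbTE bc).
Qed.

Lemma parallel_class_nonadjacent a x y : a \in nonloops M ->
  x \in parallel_class a -> y \in parallel_class a -> ~~ adjacent x y.
Proof.
rewrite !inE => aN /andP[_ xa] /andP[_ ya].
by apply: nonadjacent_trans aN xa _; rewrite adjacentC.
Qed.

Lemma parallel_class_adjacent a b x y : adjacent a b ->
  x \in parallel_class a -> y \in parallel_class b -> adjacent x y.
Proof.
rewrite !inE => ab /andP[xN xa] /andP[yN yb]; apply: contraTT ab => xy.
apply: nonadjacent_trans yN _ yb.
by apply: nonadjacent_trans xN _ xy; rewrite adjacentC.
Qed.

Lemma circuit_nonadjacent a b : a != b -> a \in nonloops M -> b \in nonloops M ->
  ~~ adjacent a b -> circuit M [set a; b].
Proof.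
by move=> ab aN bN nab; apply: circuit_pair => //; apply: contra (indep_adjacent ab) nab.
Qed.

Lemma card_triangle a b c : adjacent a b -> adjacent a c -> adjacent b c -> #|[set a; b; c]| = 3.
Proof.
move=> ab ac bc; rewrite setUC cardsU1 cards2 !inE negb_or (eq_sym c a) (eq_sym c b).
by rewrite (adjacent_neq ab) (adjacent_neq ac) (adjacent_neq bc).
Qed.

Lemma circuit_triangle a b c : adjacent a b -> adjacent a c -> adjacent b c ->
  circuit M [set a; b; c].
Proof.
move=> ab ac bc; apply: circuitI => [|x].
  by apply/indepP => -[B Bb /subset_leq_card]; rewrite (bases_card2 Bb) card_triangle.
have indep_sub_pair (A : {set E}) y z : adjacent y z -> A \subset [set y; z] -> indep M A.
  by move=> yz sA; apply: indepS sA (indep_basis yz).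
rewrite !inE => /orP[/orP[]|]/eqP->;
  [apply: indep_sub_pair bc _ | apply: indep_sub_pair ac _ | apply: indep_sub_pair ab _];
  apply/subsetP => v; rewrite !inE; by case: eqP; case: eqP; case: eqP.
Qed.

Lemma circuit_indep_pair C a b c : circuit M C -> a \in C -> b \in C -> c \in C ->
  c != a -> c != b -> indep M [set a; b].
Proof.
move=> Ccirc aC bC cC ca cb; apply: circuit_proper Ccirc _; apply/properP; split.
  by apply/subsetP => z; rewrite !inE => /orP[]/eqP->.
by exists c; rewrite // !inE negb_or ca cb.
Qed.

Lemma dist_lt_diam_of_disjoint D1 D2 B1 B2 x :
  D1 \in bases M -> D2 \in bases M -> [disjoint D1 & D2] ->
  B1 \in bases M -> B2 \in bases M -> x \in B1 -> x \in B2 -> dist B1 B2 < diam (bases M).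
Proof.
move=> D1b D2b D12 B1b B2b xB1 xB2; apply: leq_trans (dist_le_diam D1b D2b).
have := dist_card D1 D2; have := dist_card B1 B2.
have : 0 < #|B1 :&: B2| by apply/card_gt0P; exists x; rewrite inE xB1.
rewrite (disjoint_setI0 D12) cards0.
rewrite !(bases_card2 B1b, bases_card2 B2b, bases_card2 D1b, bases_card2 D2b); lia.
Qed.

Lemma parallel_class_self a : a \in nonloops M -> a \in parallel_class a.
Proof. by rewrite inE adjacentxx andbT. Qed.

Lemma card_parallel_classes a b : adjacent a b ->
  #|parallel_class a| + #|parallel_class b| <= #|nonloops M|.
Proof.
move=> ab; have disj : [disjoint parallel_class a & parallel_class b].
  rewrite disjoints_subset; apply/subsetP => x; rewrite !inE => /andP[xN xa].
  by apply: contraL ab => /andP[_ xb]; apply: nonadjacent_trans xN _ xb; rewrite adjacentC.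
have := (leq_card_setU (parallel_class a) (parallel_class b)).2; rewrite disj => /eqP <-.
by apply: subset_leq_card; apply/subsetP => x; rewrite !inE => /orP[]/andP[].
Qed.

Section Triangle.
Variables e f g : E.
Hypotheses (ef : adjacent e f) (eg : adjacent e g) (fg : adjacent f g).

Lemma triangle_common_neighbour x y : x \in nonloops M -> y \in nonloops M ->
  exists2 z, adjacent x z & adjacent y z.
Proof.
move=> xN yN; have two_of_three t : t \in nonloops M ->
    [|| adjacent t e && adjacent t f, adjacent t e && adjacent t g | adjacent t f && adjacent t g].
  move=> tN; move: (adjacent_cover ef tN) (adjacent_cover eg tN) (adjacent_cover fg tN).
  by case: (adjacent t e); case: (adjacent t f); case: (adjacent t g).
have [/andP[xe ye]|nxye] := boolP (adjacent x e && adjacent y e); first by exists e.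
have [/andP[xf yf]|nxyf] := boolP (adjacent x f && adjacent y f); first by exists f.
have [/andP[xg yg]|nxyg] := boolP (adjacent x g && adjacent y g); first by exists g.
move: (two_of_three x xN) (two_of_three y yN) nxye nxyf nxyg.
by case: (adjacent x e); case: (adjacent x f); case: (adjacent x g);
   case: (adjacent y e); case: (adjacent y f); case: (adjacent y g).
Qed.

Lemma triangle_component x : x \in nonloops M -> component M x = nonloops M.
Proof.
move=> xN; apply: component_nonloops => // y yN; rewrite yN.
have [<-|xy] := eqVneq x y; first exact: connxx.
have [xy_adj|nxy] := boolP (adjacent x y); last first.
  by apply: conn_circuit (circuit_nonadjacent xy xN yN nxy) _ _; rewrite !inE eqxx ?orbT.
have [z xz yz] := triangle_common_neighbour xN yN.
by apply: conn_circuit (circuit_triangle xy_adj xz yz) _ _; rewrite !inE eqxx ?orbT.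
Qed.

(* Outside [e; f; g] a nonloop x is adjacent to e or f, giving a basis disjoint from
   [f; g] or from [e; g]. *)
Lemma triangle_nonloops :
  ~~ [exists D1 in bases M, exists D2 in bases M, [disjoint D1 & D2]] ->
  nonloops M \subset [set e; f; g].
Proof.
move/exists_inPn => meet; apply/subsetP => x xN; apply: contraT.
rewrite !inE => /norP[/norP[xe xf] xg].
case/orP: (adjacent_cover ef xN) => [xe_adj|xf_adj].
  have /exists_inPn/(_ _ fg) := meet _ xe_adj.
  by rewrite disjoint_pairs // ?(adjacent_neq ef) ?(adjacent_neq eg).
have /exists_inPn/(_ _ eg) := meet _ xf_adj.
by rewrite disjoint_pairs // ?(eq_sym f e) ?(adjacent_neq ef) ?(adjacent_neq fg).
Qed.

Lemma triangle_card_bases :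
  ~~ [exists D1 in bases M, exists D2 in bases M, [disjoint D1 & D2]] ->
  #|bases M| <= #|nonloops M|.
Proof.
move=> nodisj; pose T := [set e; f; g]; have sNT := triangle_nonloops nodisj.
have sTN : T \subset nonloops M.
  by apply/subsetP => x; rewrite !inE => /orP[/orP[]|]/eqP->;
    [exact: adjacent_nonloop ef | exact: adjacent_nonloop fg | exact: adjacent_nonloop_r fg].
apply: leq_trans (subset_leq_card sTN); apply: leq_trans (leq_imset_card (fun z => T :\ z) T).
apply: subset_leq_card; apply/subsetP => B Bb.
have [|z zT ->] := subset_card_setD1 (subset_trans (bigcup_sup B Bb) sNT); last exact: imset_f.
by rewrite card_triangle // bases_card2.
Qed.

Lemma triangle_borsuk : 1 < #|bases M| -> borsuk_property M.
Proof.
move=> many.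
suff [P PB cardP] : exists2 P, borsuk_partition M P & #|P| <= #|nonloops M|.
  exact: connected_borsuk many PB cardP triangle_component.
have [/exists_inP[D1 D1b /exists_inP[D2 D2b D12]]|nodisj] :=
  boolP [exists D1 in bases M, exists D2 in bases M, [disjoint D1 & D2]].
  apply: star_borsuk_partition => // [B Bb|B1 B2 x B1b B2b _ _].
    by rewrite basis_meet_nonloops // bases_card2.
  exact: dist_lt_diam_of_disjoint D1b D2b D12 B1b B2b.
exists (preim_partition id (bases M)); first by apply: borsuk_partition_preim => // ? ? _ _ /eqP.
exact: leq_trans (card_partition_le (preim_partitionP _ _)) (triangle_card_bases nodisj).
Qed.

End Triangle.

Section Bipartite.
Variables e f : E.
Hypotheses (ef : adjacent e f) (no_triangle : forall g, ~~ (adjacent e g && adjacent f g)).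

Let eN : e \in nonloops M := adjacent_nonloop ef.
Let fN : f \in nonloops M := adjacent_nonloop_r ef.

Lemma parallel_class_cover x : x \in nonloops M ->
  (x \in parallel_class e) || (x \in parallel_class f).
Proof.
move=> xN; rewrite !inE xN /=; have := no_triangle x; rewrite ![adjacent _ x]adjacentC.
by case: (adjacent x e); case: (adjacent x f).
Qed.

Lemma bipartite_adjacent x y : adjacent x y ->
  (x \in parallel_class e) = (y \in parallel_class f).
Proof.
move=> xy; have [xe|xe] := boolP (x \in parallel_class e).
  case/orP: (parallel_class_cover (adjacent_nonloop_r xy)) => [ye|-> //].
  by move: xy; rewrite (negbTE (parallel_class_nonadjacent eN xe ye)).
have xf : x \in parallel_class f.
  by move: (parallel_class_cover (adjacent_nonloop xy)); rewrite (negbTE xe).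
apply/esym/negP => yf; move: xy; by rewrite (negbTE (parallel_class_nonadjacent fN xf yf)).
Qed.

(* A circuit through x and y cannot be [x; y], a basis; a third element z would be
   parallel to x or to y, yet independent with it. *)
Lemma bipartite_not_conn x y : x \in parallel_class e -> y \in parallel_class f -> ~~ conn M x y.
Proof.
move=> xe yf; have xy := adjacent_neq (parallel_class_adjacent ef xe yf).
rewrite /conn (negbTE xy); apply/existsP => -[C /andP[/andP[Ccirc xC] yC]].
have /subsetPn[z zC] : ~~ (C \subset [set x; y]).
  case/andP: (Ccirc) => Cdep _; apply: contra Cdep => sC.
  exact: indepS sC (indep_basis (parallel_class_adjacent ef xe yf)).
rewrite !inE negb_or ![z == _]eq_sym => /andP[xz yz]; have yx : y != x by rewrite eq_sym.
have zN : z \in nonloops M.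
  by apply: contraT => zloop; move: xz; rewrite (circuit_loop Ccirc zC zloop xC) eqxx.
case/orP: (parallel_class_cover zN) => [ze|zf].
  have := indep_adjacent xz (circuit_indep_pair Ccirc xC zC yC yx yz).
  by rewrite (negbTE (parallel_class_nonadjacent eN xe ze)).
have := indep_adjacent yz (circuit_indep_pair Ccirc yC zC xC xy xz).
by rewrite (negbTE (parallel_class_nonadjacent fN yf zf)).
Qed.

Lemma bipartite_component x : x \in parallel_class e -> component M x = parallel_class e.
Proof.
move=> xe; have xN : x \in nonloops M by move: xe; rewrite inE => /andP[].
apply: component_nonloops => //; first by apply/subsetP => y; rewrite inE => /andP[].
move=> y yN; have [<-|xy] := eqVneq x y; first by rewrite connxx xe.
have [ye|ye] := boolP (y \in parallel_class e).
  have nxy := parallel_class_nonadjacent eN xe ye.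
  by apply: conn_circuit (circuit_nonadjacent xy xN yN nxy) _ _; rewrite !inE eqxx ?orbT.
apply/negbTE/bipartite_not_conn => //.
by move: (parallel_class_cover yN); rewrite (negbTE ye).
Qed.

Lemma bipartite_borsuk_partition : 1 < #|bases M| ->
  #|parallel_class e| <= #|parallel_class f| ->
  exists2 P, borsuk_partition M P & #|P| <= #|parallel_class f|.
Proof.
move=> many le_ef.
apply: star_borsuk_partition => // [B Bb|B1 B2 q B1b B2b B12 qf qB1 qB2].
  have /card_gt0P[x xB] : 0 < #|B| by rewrite bases_card2.
  have [y xy ->] := basis_adjacent Bb xB; apply/set0Pn.
  have [xf|xf] := boolP (x \in parallel_class f); first by exists x; rewrite in_setI set21.
  exists y; rewrite in_setI set22 -(bipartite_adjacent xy).
  by move: (parallel_class_cover (adjacent_nonloop xy)); rewrite (negbTE xf) orbF.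
have [p1 qp1 B1q] := basis_adjacent B1b qB1; have [p2 qp2 B2q] := basis_adjacent B2b qB2.
have p12 : p1 != p2 by apply: contraNneq B12 => p12; rewrite B1q B2q p12.
have p1e : p1 \in parallel_class e by rewrite (bipartite_adjacent (etrans (adjacentC _ _) qp1)).
have p2e : p2 \in parallel_class e by rewrite (bipartite_adjacent (etrans (adjacentC _ _) qp2)).
have /card_gt1P[r1 [r2 [r1f r2f r12]]] : 1 < #|parallel_class f|.
  by apply: leq_trans le_ef; apply/card_gt1P; exists p1, p2.
have p1r1 := parallel_class_adjacent ef p1e r1f; have p2r2 := parallel_class_adjacent ef p2e r2f.
apply: (dist_lt_diam_of_disjoint p1r1 p2r2 _ B1b B2b qB1 qB2).
rewrite disjoint_pairs // ?(adjacent_neq (parallel_class_adjacent ef p1e r2f)) //.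
by rewrite eq_sym adjacent_neq // (parallel_class_adjacent ef p2e r1f).
Qed.

End Bipartite.

Lemma bipartite_borsuk e f : adjacent e f -> (forall g, ~~ (adjacent e g && adjacent f g)) ->
  1 < #|bases M| -> borsuk_property M.
Proof.
move=> ef no_triangle many.
have fe : adjacent f e by rewrite adjacentC.
have no_triangle' g : ~~ (adjacent f g && adjacent e g) by rewrite andbC.
have [P PB cardP] : exists2 P, borsuk_partition M P &
    #|P| <= maxn #|parallel_class e| #|parallel_class f|.
  have [le_ef|/ltnW le_fe] := leqP #|parallel_class e| #|parallel_class f|.
    by have [P ? ?] := bipartite_borsuk_partition ef no_triangle many le_ef; exists P; lia.
  by have [P ? ?] := bipartite_borsuk_partition fe no_triangle' many le_fe; exists P; lia.
apply: (borsuk_property_of_partition many PB (Q := [set parallel_class e; parallel_class f])).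
  move=> x /(parallel_class_cover no_triangle)/orP[xe|xf].
    by rewrite (bipartite_component ef no_triangle xe) !inE eqxx.
  by rewrite (bipartite_component fe no_triangle' xf) !inE eqxx orbT.
have e_pos : 0 < #|parallel_class e|.
  by apply/card_gt0P; exists e; apply/parallel_class_self/(adjacent_nonloop ef).
have f_pos : 0 < #|parallel_class f|.
  by apply/card_gt0P; exists f; apply/parallel_class_self/(adjacent_nonloop fe).
have := card_parallel_classes ef; rewrite cards2; case: (_ != _); lia.
Qed.

End RankTwo.

Theorem theorem2 (E : finType) (M : matroid E) :
  1 < #|bases M| -> rank M <= 2 -> borsuk_property M.
Proof.
move=> many rank_le2; have /set0Pn[B0 B0b] := bases_nonempty M.
have cardB B : B \in bases M -> #|B| = #|B0| by move/card_bases_eq; apply.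
have : #|B0| <= 2 by apply: leq_trans rank_le2; apply: (bigmax_sup B0).
move: cardB; case: #|B0| => [|[|[|//]]] cardB _.
- have : bases M \subset [set set0] by apply/subsetP => B /cardB/cards0_eq ->; rewrite set11.
  by move/subset_leq_card; rewrite cards1 leqNgt many.
- exact: rank_one_borsuk.
- have /card_gt0P[e eB0] : 0 < #|B0| by rewrite cardB.
  have [f ef _] := basis_adjacent cardB B0b eB0.
  have [/existsP[g /andP[eg fg]]|/existsPn no_triangle] :=
    boolP [exists g, adjacent M e g && adjacent M f g].
    exact: (triangle_borsuk cardB ef eg fg many).
  exact: (bipartite_borsuk cardB ef no_triangle many).
Qed.
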